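(* Let $a\in\mathbb{N}$ and $b,d\in\mathbb{Z}$ with $b>d$, $\gcd(a,b-d)=1$ and $a\mid bd$. Then there exist $A,B\in\mathbb{N}$ with $B\ge 2$ and $A=B(B-1)$ such that $R_{a,b,a,d}\supseteq R_{A,B,A,B-1}$; in particular $\omega(G_{a,b,a,d})\ge\omega(G_{A,B,A,B-1})$. Moreover, there exist $C,D\in\mathbb{N}$ such that for every integer $m\ge 1$, setting $n=Cm+D$, $$\frac{an+b}{an+d}=\frac{Am+B}{Am+(B-1)}.$$
   Context: $\mathbb{N}=\{1,2,\dots\}$. For $a,c\in\mathbb{N}$, $b,d\in\mathbb{Z}$, $R_{a,b,c,d} := \left\{ \frac{an+b}{cn+d} : n \in \mathbb{N} \right\} \cap (\mathbb{Q}_{>0}\setminus\{1\})$; $G_{a,b,c,d}$ is the graph with vertex set $\mathbb{N}$ and edge set $\{\{m,n\}: m/n\in R_{a,b,c,d}\}$. $\omega$ denotes clique number. *)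

From mathcomp Require Import all_boot all_order all_algebra.
Set Implicit Arguments.
Unset Strict Implicit.
Unset Printing Implicit Defensive.
Import Order.TTheory GRing.Theory Num.Theory.
Local Open Scope ring_scope.

(* When c n + d = 0, MathComp's division yields 0, which is excluded by
   the positivity condition, so undefined fractions never enter the set. *)
Definition Rset (a : nat) (b : int) (c : nat) (d : int) (q : rat) : Prop :=
  (exists n : nat, (1 <= n)%N /\
     q = ((a%:R * n%:R + b%:~R) / (c%:R * n%:R + d%:~R) : rat))
  /\ 0 < q /\ q != 1.

Definition Gadj (a : nat) (b : int) (c : nat) (d : int) (m n : nat) : Prop :=
  (1 <= m)%N /\ (1 <= n)%N /\
  (Rset a b c d (m%:R / n%:R) \/ Rset a b c d (n%:R / m%:R)).

Definition has_clique (a : nat) (b : int) (c : nat) (d : int) (k : nat) : Prop :=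
  exists s : seq nat, [/\ uniq s, size s = k, all (fun x => 0 < x)%N s &
    forall x y, x \in s -> y \in s -> x != y -> Gadj a b c d x y].

(* omega(G_{a1,b1,c1,d1}) >= omega(G_{a2,b2,c2,d2}), clique numbers taken
   in N ∪ {∞} as the supremum of sizes of finite cliques: every clique size
   realised in the second graph is realised in the first. *)
Definition omega_ge (a1 : nat) (b1 : int) (c1 : nat) (d1 : int)
    (a2 : nat) (b2 : int) (c2 : nat) (d2 : int) : Prop :=
  forall k : nat, has_clique a2 b2 c2 d2 k -> has_clique a1 b1 c1 d1 k.

From mathcomp Require Import all_boot all_order all_algebra.
From mathcomp Require Import zify ring.
Import Order.TTheory GRing.Theory Num.Theory.
Local Open Scope ring_scope.

Set Implicit Arguments.
Unset Strict Implicit.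

(* With e := b - d invertible modulo a, choose B1, D >= 1 with e B1 = a D + d.
   Then e (B1 + 1) = a D + b, so e^2 (B1 + 1) B1 = (a D + b)(a D + d) is
   divisible by a because a | b d; as e is a unit mod a, a | (B1 + 1) B1 = Q a.
   With B := B1 + 1 and A := B (B - 1) = Q a, the substitution n = e Q m + D
   turns a n + b and a n + d into e (A m + B) and e (A m + B - 1). *)

Definition frac (a : nat) (b : int) (c : nat) (d : int) (n : nat) : rat :=
  (a%:R * n%:R + b%:~R) / (c%:R * n%:R + d%:~R).

Lemma Rset_sub_of_reparam (a1 : nat) (b1 : int) (c1 : nat) (d1 : int)
    (a2 : nat) (b2 : int) (c2 : nat) (d2 : int) (C D : nat) :
  (1 <= D)%N ->
  (forall m : nat, (1 <= m)%N -> frac a1 b1 c1 d1 (C * m + D) = frac a2 b2 c2 d2 m) ->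
  forall q : rat, Rset a2 b2 c2 d2 q -> Rset a1 b1 c1 d1 q.
Proof.
move=> D1 reparam q [[m [m1 ->]] [q_gt0 q_neq1]]; split=> //.
exists (C * m + D)%N; split; first by rewrite addn_gt0 D1 orbT.
exact/esym/reparam.
Qed.

Lemma omega_ge_of_Rset_sub (a1 : nat) (b1 : int) (c1 : nat) (d1 : int)
    (a2 : nat) (b2 : int) (c2 : nat) (d2 : int) :
  (forall q : rat, Rset a2 b2 c2 d2 q -> Rset a1 b1 c1 d1 q) ->
  omega_ge a1 b1 c1 d1 a2 b2 c2 d2.
Proof.
move=> sub k [s [s_uniq s_size s_pos s_clique]].
exists s; split=> // x y xs ys xy.
have [x1 [y1 adj]] := s_clique x y xs ys xy; do 2!split=> //.
by case: adj => [/sub|/sub]; [left|right].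
Qed.

Lemma coprimez_affine_pos_solution (a e d : int) :
  0 < a -> 0 < e -> coprimez a e ->
  exists B1 D : int, [/\ 0 < B1, 0 < D & e * B1 = a * D + d].
Proof.
move=> a_gt0 e_gt0 /eqP cop.
have [u [v bezout]] := Bezoutz a e; rewrite cop in bezout.
(* Shifting the Bezout solution (v d, -u d) by k (a, e) makes both entries positive. *)
pose k := `|u * d| + `|v * d| + 1.
have ud_le := ler_norm (u * d).
have vd_le := ler_norm (- (v * d)); rewrite normrN in vd_le.
have k_ge0 : 0 <= k by rewrite /k; lia.
have ka := ler_peMr k_ge0 (a_gt0 : 1 <= a).
have ke := ler_peMl k_ge0 (e_gt0 : 1 <= e).
exists (v * d + k * a), (e * k - u * d); split; [lia | lia |].
apply/eqP; rewrite -subr_eq0.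
have -> : e * (v * d + k * a) - (a * (e * k - u * d) + d) = d * (u * a + v * e - 1)
  by ring.
by rewrite bezout subrr mulr0.
Qed.

Lemma dvdz_succ_mul_of_affine (a b d B1 D : int) :
  coprimez a (b - d) -> (a %| b * d)%Z -> (b - d) * B1 = a * D + d ->
  (a %| (B1 + 1) * B1)%Z.
Proof.
move=> cop /dvdzP [w bd_eq] affine.
rewrite -(Gauss_dvdzl _ cop) -(Gauss_dvdzl _ cop); apply/dvdzP.
exists (a * D * D + D * (b + d) + w).
have -> : (B1 + 1) * B1 * (b - d) * (b - d)
    = ((b - d) * B1 + (b - d)) * ((b - d) * B1) by ring.
rewrite affine.
transitivity (a * (a * D * D + D * (b + d)) + b * d); first ring.
by rewrite bd_eq; ring.
Qed.

Lemma reparam_frac (a e Q B1 D : nat) (d : int) :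
  (0 < e)%N -> (Q * a = B1.+1 * B1)%N -> e%:Z * B1%:Z = a%:Z * D%:Z + d ->
  forall m : nat,
    frac a (e%:Z + d) a d (e * Q * m + D)
    = frac (B1.+1 * (B1.+1 - 1)) B1.+1 (B1.+1 * (B1.+1 - 1)) (B1.+1%:Z - 1) m.
Proof.
move=> e_gt0 QaE affine m; rewrite /frac subn1 /=.
have scale (c : nat) : (a%:R * (e * Q * m + D)%N%:R + (d + e%:Z * c%:Z)%:~R : rat)
    = e%:R * ((B1.+1 * B1)%N%:R * m%:R + (B1 + c)%N%:R).
  rewrite !pmulrn -!intrM -!intrD -!intrM; congr (_ %:~R).
  rewrite -QaE !PoszD !PoszM.
  transitivity (e%:Z * m%:Z * (Q%:Z * a%:Z) + (a%:Z * D%:Z + d) + e%:Z * c%:Z);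
    first ring.
  by rewrite -affine; ring.
rewrite (addrC e%:Z d).
have := scale 1%N; have := scale 0%N; rewrite mulr1 mulr0 addr0 addn0 addn1.
move=> -> ->.
rewrite invfM mulrACA mulfV ?mul1r ?pnatr_eq0 -?lt0n //.
by have -> : B1.+1%:Z - 1 = B1 by rewrite -addn1 PoszD addrK.
Qed.

Lemma nat_affine_data (a : nat) (b d : int) :
  (0 < a)%N -> d < b -> coprimez a%:Z (b - d) -> (a%:Z %| b * d)%Z ->
  exists e B1 D Q : nat, [/\ [&& 0 < e, 0 < B1 & 0 < D]%N,
    b = e%:Z + d, (Q * a = B1.+1 * B1)%N & e%:Z * B1%:Z = a%:Z * D%:Z + d].
Proof.
move=> a_gt0 lt_db cop dvd_bd.
have e_gt0 : 0 < b - d by rewrite subr_gt0.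
have [B1 [D [B1_gt0 D_gt0 affine]]] :=
  coprimez_affine_pos_solution (a := a%:Z) d a_gt0 e_gt0 cop.
case: B1 B1_gt0 affine => [B1|//] B1_gt0; case: D D_gt0 => [D|//] D_gt0 affine.
have := dvdz_succ_mul_of_affine cop dvd_bd affine.
have b_eq : b = (b - d) + d by rewrite subrK.
move: e_gt0 b_eq affine; case: (b - d) => [e|//] e_gt0 b_eq affine.
have -> : (B1%:Z + 1) * B1%:Z = (B1.+1 * B1)%N by rewrite -addn1 PoszM PoszD.
move=> /= dvd_B1; exists e, B1, D, ((B1.+1 * B1) %/ a)%N.
by split=> //; [apply/and3P | apply: divnK].
Qed.

Theorem lemma3p3 (a : nat) (b d : int) :
  (1 <= a)%N -> d < b -> coprimez a%:Z (b - d) -> (a%:Z %| b * d)%Z ->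
  exists A B : nat,
    [/\ (2 <= B)%N, A = (B * (B - 1))%N,
        (forall q : rat, Rset A B%:Z A (B%:Z - 1) q -> Rset a b a d q),
        omega_ge a b a d A B%:Z A (B%:Z - 1) &
        exists C D : nat, [/\ (1 <= C)%N, (1 <= D)%N &
          forall m : nat, (1 <= m)%N ->
            let n := (C * m + D)%N in
            ((a%:R * n%:R + b%:~R) / (a%:R * n%:R + d%:~R) : rat)
            = (A%:R * m%:R + B%:R) / (A%:R * m%:R + (B%:Z - 1)%:~R)]].
Proof.
move=> a_gt0 lt_db cop dvd_bd.
have [e [B1 [D [Q [/and3P [e_gt0 B1_gt0 D_gt0] b_eq QaE affine]]]]] :=
  nat_affine_data a_gt0 lt_db cop dvd_bd.
have reparam := reparam_frac e_gt0 QaE affine.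
rewrite {}b_eq.
have sub := Rset_sub_of_reparam (C := (e * Q)%N) D_gt0 (fun m _ => reparam m).
exists (B1.+1 * (B1.+1 - 1))%N, B1.+1; split=> //.
- exact: omega_ge_of_Rset_sub.
- exists (e * Q)%N, D; split=> //; last by move=> m _; apply: reparam.
  have : (0 < Q * a)%N by rewrite QaE muln_gt0 B1_gt0.
  rewrite muln_gt0 => /andP [Q_gt0 _].
  by rewrite muln_gt0 e_gt0.
Qed.
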